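(* Let $R$ be a discrete $\Gamma$-ring, $r\in R[2]$ a formal difference law, $n\ge0$, and $f:[2^n]\to[k]$ a pointed map with $f(\pm1_n)=(n_1,\dots,n_k)\in H\mathbb Z[k]$. Let $S\subseteq\{1,\dots,2^n\}$ be a subset such that for each $m\in\{1,\dots,k\}$ the set $S\cap f^{-1}(m)$ consists of exactly $|n_m|$ elements, all of which carry the sign of $n_m$ in $\pm1_n$ (i.e. lie in $A_+$ if $n_m>0$ and in $A_-$ if $n_m<0$). Let $g:[2^n]\to[k]$ be the pointed map which agrees with $f$ on $S$ and sends all other elements to $0$. Then $f(r^n)=g(r^n)$ in $R[k]$.
   Context: Let $[n]=\{0,1,\dots,n\}$, pointed at $0$. A $\Gamma$-space is a functor $F$ from the finite pointed sets $[n]$ (with pointed maps) to pointed simplicial sets with $F[0]$ a point; for a pointed map $f$ we write $f$ also for $F(f)$; $\Sigma_n$ acts on $F[n]$ via permutations of $\{1,\dots,n\}$. We identify $[n]\wedge[m]$ with $[nm]$ via $i\wedge j\mapsto (j-1)n+i$. A $\Gamma$-ring is a $\Gamma$-space $R$ with unit $1\in R[1]$ and associative unital multiplication given by natural maps $R(K)\wedge R(L)\to R(K\wedge L)$, $p\wedge q\mapsto pq$; it is discrete if all $R(K)$ are sets; $0\in R[1]$ denotes the basepoint. For $x\in R[2]$, $x^k\in R[2^k]$ is the $k$-fold product. Maps: $p^n_i:[n]\to[n-1]$, $p^n_i(j)=j$ ($j<i$), $p^n_i(i)=0$, $p^n_i(j)=j-1$ ($j>i$); for $1\le i<j\le n$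 and $1\le k\le n-1$, $s^n_{i,j,k}:[n]\to[n-1]$ sends $0\mapsto0$, $i,j\mapsto k$, and the remaining elements order-preservingly and bijectively onto $\{1,\dots,n-1\}\setminus\{k\}$; $d^n_j:[n-1]\to[n]$ is the order-preserving injection missing $j$. $H\mathbb{Z}(K)$ is the reduced free abelian group on $K$ (so $H\mathbb Z[k]=\mathbb Z^k$), pointed maps acting by summing coefficients along fibres, with multiplication $(\sum a_k k)(\sum b_l l)=\sum a_kb_l (k\wedge l)$; $\pm1_n=(1,-1)^n\in H\mathbb{Z}[2^n]$. For $k\ge1$, split $\{1,\dots,2^k\}=A_+\sqcup A_-$ where $i\in A_+$ iff the binary expansion of $i-1$ has an even number of digits $1$; $\pm1_k$ has entry $+1$ on $A_+$ and $-1$ on $A_-$. The special action of $\Sigma_{2^{k-1}}\times\Sigma_{2^{k-1}}$ on $F[2^k]$ is the action of the group of permutations of $\{1,\dots,2^k\}$ preserving $A_+$ and $A_-$. Let $\sigma$ be the nontrivial element of $\Sigma_2$. A formal difference law in $R$ is $r\in R[2]$ such that: (1) $p^2_2(r)=1$ and $s^2_{1,2,1}(r)=0$; (2) $p^2_1(r)\,r=r\,p^2_1(r)=\sigma(r)$ in $R[2]$; (3) for every $k\ge1$, $r^k$ is fixed under the special action; (4) for every $k\ge1$, all $1\le i<j\le 2^k$ with one of $i,j$ in $A_+$ and the other in $A_-$, and all $1\le l\le 2^k-1$: $s^{2^k}_{i,j,l}(r^k)=d^{2^k-1}_l\,p^{2^k-1}_i\,p^{2^k}_j(r^k)$. *)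

From HB Require Import structures.
From mathcomp Require Import all_boot all_order all_algebra.
Set Implicit Arguments. Unset Strict Implicit. Unset Printing Implicit Defensive.
Import Order.TTheory GRing.Theory Num.Theory.

(* Pointed maps [n] -> [m], where [n] = {0,...,n} = 'I_n.+1, pointed at 0. *)
Definition pmor (n m : nat) :=
  {f : {ffun 'I_n.+1 -> 'I_m.+1} | f ord0 == ord0}.

Definition pfun n m (f : pmor n m) : 'I_n.+1 -> 'I_m.+1 := fun i => sval f i.
Coercion pfun : pmor >-> Funclass.

Lemma mkp_subproof n m (h : 'I_n.+1 -> 'I_m.+1) :
  [ffun i : 'I_n.+1 => if i == ord0 then ord0 else h i] ord0 == ord0.
Proof. by rewrite ffunE eqxx. Qed.

Definition mkp n m (h : 'I_n.+1 -> 'I_m.+1) : pmor n m :=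
  exist _ [ffun i : 'I_n.+1 => if i == ord0 then ord0 else h i] (mkp_subproof h).

Definition nmap n m (h : nat -> nat) : pmor n m :=
  mkp (fun i : 'I_n.+1 => @inord m (h (val i))).

Definition pid n : pmor n n := mkp id.
Definition pcomp n m l (g : pmor m l) (f : pmor n m) : pmor n l :=
  mkp (fun i => g (f i)).
Definition pcast n m (e : n = m) : pmor n m := nmap n m id.

(* f /\ g : [n] /\ [m] -> [n'] /\ [m'], using [n] /\ [m] = [nm],
   i /\ j |-> (j-1) n + i *)
Definition psmash n m n' m' (f : pmor n n') (g : pmor m m') : pmor (n * m) (n' * m') :=
  nmap (n * m) (n' * m') (fun x =>
    let i := (x.-1 %% n).+1 in
    let j := (x.-1 %/ n).+1 in
    let fi := val (f (@inord n i)) in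
    let gj := val (g (@inord m j)) in
    if (fi == 0) || (gj == 0) then 0 else gj.-1 * n' + fi).

(* Discrete Gamma-rings: Gamma-spaces with values in pointed sets, with unit
   and associative unital natural multiplication R[n] /\ R[m] -> R[nm]. *)
Record GammaRing := {
  car :> nat -> Type;
  base : forall n, car n;
  act : forall n m, pmor n m -> car n -> car m;
  car0 : forall x : car 0, x = base 0;
  act_base : forall n m (f : pmor n m), act f (base n) = base m;
  act_id : forall n (x : car n), act (pid n) x = x;
  act_comp : forall n m l (f : pmor n m) (g : pmor m l) (x : car n),
      act g (act f x) = act (pcomp g f) x;
  one : car 1;
  mul : forall n m, car n -> car m -> car (n * m);
  mul_base_l : forall n m (q : car m), mul (base n) q = base (n * m);
  mul_base_r : forall n m (p : car n), mul p (base m) = base (n * m);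
  mul_natural : forall n m n' m' (f : pmor n n') (g : pmor m m') p q,
      mul (act f p) (act g q) = act (psmash f g) (mul p q);
  mul1r : forall n (p : car n), mul one p = act (pcast (esym (mul1n n))) p;
  mulr1 : forall n (p : car n), mul p one = act (pcast (esym (muln1 n))) p;
  mulA : forall n m l (p : car n) (q : car m) (s : car l),
      act (pcast (mulnA n m l)) (mul p (mul q s)) = mul (mul p q) s
}.
Arguments base {R} n : rename.
Arguments act {R n m} f x : rename.
Arguments one {R} : rename.
Arguments mul {R n m} p q : rename.

Fixpoint rpow (R : GammaRing) (x : R 2) (k : nat) : R (2 ^ k) :=
  match k as k0 return R (2 ^ k0) with
  | 0 => act (pcast (esym (expn0 2))) one
  | k'.+1 => act (pcast (esym (expnSr 2 k'))) (mul (rpow x k') x)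
  end.

Definition pp n i : pmor n n.-1 :=
  nmap n n.-1 (fun x => if x < i then x else if x == i then 0 else x.-1).
Definition dd n j : pmor n.-1 n :=
  nmap n.-1 n (fun x => if x < j then x else x.+1).
Definition ss n i j k : pmor n n.-1 :=
  nmap n n.-1 (fun x =>
    if (x == i) || (x == j) then k
    else let r := x - (i < x) - (j < x) in if r < k then r else r.+1).
Definition sigma2 : pmor 2 2 := nmap 2 2 (fun x => 3 - x).

Definition popcount (x : nat) : nat := \sum_(j < x.+1) odd (x %/ 2 ^ j).
Definition Aplus (i : nat) : bool := ~~ odd (popcount i.-1).
(* entry of +-1_n at position i (i >= 1) *)
Definition pm1 (i : nat) : int := if Aplus i then 1%R else (-1)%R.

Definition formal_difference_law (R : GammaRing) (r : R 2) : Prop :=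
  (act (pp 2 2) r = one /\ act (ss 2 1 2 1) r = base 1) /\
  (mul (act (pp 2 1) r) r = act sigma2 r /\ mul r (act (pp 2 1) r) = act sigma2 r) /\
  (forall k, 0 < k ->
     forall f : pmor (2 ^ k) (2 ^ k), injective f ->
       (forall x : 'I_(2 ^ k).+1, x != ord0 -> Aplus (f x) = Aplus x) ->
       act f (rpow r k) = rpow r k) /\
  (forall k, 0 < k -> forall i j l : nat,
     1 <= i -> i < j -> j <= 2 ^ k -> Aplus i != Aplus j ->
     1 <= l -> l <= (2 ^ k).-1 ->
     act (ss (2 ^ k) i j l) (rpow r k) =
       act (dd (2 ^ k).-1 l) (act (pp (2 ^ k).-1 i) (act (pp (2 ^ k) j) (rpow r k)))).

(* f(+-1_n) in HZ[k]: the m-th coordinate *)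
Definition push_pm1 n k (f : pmor (2 ^ n) k) (m : 'I_k.+1) : int :=
  (\sum_(x : 'I_(2 ^ n).+1 | (x != ord0) && (f x == m)) pm1 x)%R.

Definition restrict n k (f : pmor n k) (S : {set 'I_n.+1}) : pmor n k :=
  mkp (fun x => if x \in S then f x else ord0).

From Pilot Require Import Defs.
From HB Require Import structures.
From mathcomp Require Import all_boot all_order all_algebra zify.
Import Order.TTheory GRing.Theory Num.Theory.

(* - Pair cancellation ([cancel_pair]): if [f a = f b] for nonzero indices
     [a < b] of opposite sign in [+-1_n], then [f] factors as [h s_{a,b,1}],
     while [f] with [a], [b] killed factors as [h d_1 p_a p_b] through the
     same [h] ([collapse_factor], [collapse_kill_factor]); axiom (4) of a
     formal difference law identifies the two images of [r^n].
   - Call [D] balanced for [f] when its indices contribute zero to every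
     nonzero coordinate of [f(+-1_n)].  In a balanced set every index not
     killed by [f] has an opposite-sign partner with the same image, and
     removing such a pair keeps the set balanced.  Hence, by induction on
     [#|T :\: S|], [restrict f T] and [restrict f S] have the same image of
     [r^n] whenever [T :\: S] is balanced ([cancel_balanced]).
   - The hypotheses on [S] say exactly that [S] carries the full signed
     count [f(+-1_n)], so [[set: _] :\: S] is balanced and the theorem
     follows with [T = [set: _]]. *)

Lemma pmor_ext n m (f g : pmor n m) : (forall x, f x = g x) -> f = g.
Proof. by move=> fg; apply: val_inj; apply/ffunP => x; apply: fg. Qed.

Lemma pmor0 n m (f : pmor n m) : f ord0 = ord0.
Proof. exact/eqP/(proj2_sig f). Qed.

Lemma mkpE n m (h : 'I_n.+1 -> 'I_m.+1) x :
  mkp h x = if x == ord0 then ord0 else h x.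
Proof. by rewrite /pfun /= ffunE. Qed.

Lemma pcompE n m l (g : pmor m l) (f : pmor n m) x : Defs.pcomp g f x = g (f x).
Proof. by rewrite /Defs.pcomp mkpE; case: eqP => [->|//]; rewrite !pmor0. Qed.

Lemma nmapE n m h (x : 'I_n.+1) : val (nmap n m h x) =
  if val x == 0 then 0 else if h (val x) < m.+1 then h (val x) else 0.
Proof.
rewrite /nmap mkpE -(inj_eq val_inj) /=.
by case: (val x == 0) => //; rewrite /inord val_insubd.
Qed.

(* Index arithmetic behind [s^N_{i,j,1}], [p^N_i] and [d^N_l]: [collapse i j]
   sends [i], [j] to 1 and the rest of {1..N} increasingly onto {2..N-1};
   [uncollapse i j] is a section of it which sends 1 back to [i]. *)
Definition collapse i j (x : nat) : nat :=
  if (x == i) || (x == j) then 1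
  else let r := x - (i < x) - (j < x) in if r < 1 then r else r.+1.

Definition uncollapse i j (y : nat) : nat :=
  if y == 1 then i else
  let z := y.-1 in if z < i then z else if z.+1 < j then z.+1 else z.+2.

Ltac case_ifs :=
  repeat match goal with
  | |- context [if ?b then _ else _] =>
      lazymatch b with context [if _ then _ else _] => fail | _ => idtac end;
      let E := fresh in case E: b => /=
  end; try lia.

Section Collapse.
Variables (N i j : nat).
Hypotheses (i_gt0 : 0 < i) (lt_ij : i < j) (j_le : j <= N).

Lemma collapseK v : 0 < v <= N -> v != i -> v != j ->
  1 < collapse i j v <= N.-1 /\ uncollapse i j (collapse i j v) = v.
Proof. by move=> *; rewrite /collapse /uncollapse; case_ifs. Qed.

Lemma val_ss (x : 'I_N.+1) :
  val (ss N i j 1 x) = if val x == 0 then 0 else collapse i j (val x).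
Proof.
move: (ltn_ord x); rewrite nmapE -/(collapse i j (val x)) /=.
by move: (nat_of_ord x) => v v_le; rewrite /collapse; case_ifs.
Qed.

Lemma val_dpp (x : 'I_N.+1) :
  val (Defs.pcomp (dd N.-1 1) (Defs.pcomp (pp N.-1 i) (pp N j)) x) =
  if (val x == 0) || (val x == i) || (val x == j) then 0 else collapse i j (val x).
Proof.
have hx := ltn_ord x; rewrite !pcompE !nmapE /=.
by move: (nat_of_ord x) hx => v hv; rewrite /collapse; case_ifs.
Qed.

End Collapse.

Lemma restrictE {n k} (f : pmor n k) (S : {set 'I_n.+1}) x :
  restrict f S x = if x \in S then f x else ord0.
Proof. by rewrite /restrict mkpE; case: eqP => // ->; rewrite pmor0; case: ifP. Qed.

Lemma restrict_setT {n k} (f : pmor n k) : restrict f [set: 'I_n.+1] = f.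
Proof. by apply: pmor_ext => x; rewrite restrictE inE. Qed.

Lemma restrict_restrict {n k} (f : pmor n k) (S T : {set 'I_n.+1}) :
  restrict (restrict f T) S = restrict f (T :&: S).
Proof.
by apply: pmor_ext => x; rewrite !restrictE inE; case: (x \in S); case: (x \in T).
Qed.

Lemma restrict_vanishing {n k} (f : pmor n k) {S T : {set 'I_n.+1}} :
  S \subset T -> {in T :\: S, forall x, f x = ord0} -> restrict f T = restrict f S.
Proof.
move=> sST f0; apply: pmor_ext => x; rewrite !restrictE.
case xS: (x \in S); first by rewrite (subsetP sST).
by case xT: (x \in T) => //; apply: f0; rewrite inE xS xT.
Qed.

Lemma setD_pair_remove (I : finType) (T S : {set I}) x y :
  (T :&: ~: [set x; y]) :\: S = (T :\: S) :\: [set x; y].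
Proof.
by apply/setP => z; rewrite !inE; case: (z \in S); case: (z \in T); rewrite ?andbF ?andbT.
Qed.

Lemma card_setD_pair (I : finType) (D : {set I}) x y :
  x \in D -> #|D :\: [set x; y]| < #|D|.
Proof.
move=> xD; apply/proper_card/(sub_proper_trans _ (properD1 xD)).
by apply: setDS; rewrite sub1set !inE eqxx.
Qed.

Section CollapseFactor.
Variables (N k : nat) (f : pmor N k) (a b : 'I_N.+1).
Hypotheses (a_ne0 : a != ord0) (lt_ab : a < b) (fab : f a = f b).

Let a_gt0 : 0 < a. Proof. by move: a_ne0; rewrite lt0n -(inj_eq val_inj). Qed.
Let b_le : b <= N. Proof. by rewrite -ltnS ltn_ord. Qed.

Definition through_collapse : pmor N.-1 k :=
  mkp (fun y => f (inord (uncollapse a b y))).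

(* [h] takes the value [f x] at the collapse of every nonzero index [x];
   for [x = b] this is where [f a = f b] is used. *)
Lemma through_collapseE (x : 'I_N.+1) (y : 'I_N.-1.+1) :
  x != ord0 -> val y = collapse a b x -> through_collapse y = f x.
Proof.
rewrite -(inj_eq val_inj) /= => x_ne0 yE.
have y_ne0 : y != ord0.
  by rewrite -(inj_eq val_inj) /= yE /collapse; case_ifs.
have uncollapse_x : f (inord (uncollapse a b (collapse a b x))) = f x.
  have [-> | xa] := eqVneq x a; first by rewrite /collapse eqxx /uncollapse /= inord_val.
  have [-> | xb] := eqVneq x b.
    by rewrite /collapse eqxx orbT /uncollapse /= inord_val.
  rewrite -(inj_eq val_inj) in xa xb.
  have x_range : 0 < x <= N by rewrite lt0n x_ne0 -ltnS ltn_ord.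
  by have [_ ->] := @collapseK N a b a_gt0 lt_ab b_le x x_range xa xb; rewrite inord_val.
by rewrite /through_collapse mkpE (negbTE y_ne0) yE.
Qed.

Lemma collapse_factor : f = Defs.pcomp through_collapse (ss N a b 1).
Proof.
apply: pmor_ext => x; rewrite pcompE.
have [-> | x_ne0] := eqVneq x ord0; first by rewrite !pmor0.
apply/esym/through_collapseE => //.
by rewrite (@val_ss N a b) // -(inj_eq val_inj) /= in x_ne0 *; rewrite (negbTE x_ne0).
Qed.

Lemma collapse_kill_factor : restrict f (~: [set a; b]) =
  Defs.pcomp through_collapse (Defs.pcomp (dd N.-1 1) (Defs.pcomp (pp N.-1 a) (pp N b))).
Proof.
apply: pmor_ext => x; rewrite restrictE pcompE !inE.
have [-> | x_ne0] := eqVneq x ord0; first by rewrite !pmor0; case: ifP.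
have := @val_dpp N a b a_gt0 lt_ab b_le x; set y := Defs.pcomp _ _ x => yE.
rewrite -!(inj_eq val_inj) in x_ne0 *; rewrite (negbTE x_ne0) /= in yE.
case: ifP => [/norP[xa xb] | /negbFE /= xab].
  apply/esym/through_collapseE => //.
  by move: xa xb => /= /negbTE xa /negbTE xb; rewrite /= yE xa xb.
have -> : y = ord0 by apply: val_inj; rewrite /= yE xab.
by rewrite pmor0.
Qed.

End CollapseFactor.

(* This is axiom (4) of a formal difference law,
   transported along the factorisations [collapse_factor] and
   [collapse_kill_factor]. *)
Lemma cancel_pair {R : GammaRing} {r : R 2} {n k : nat} {f : pmor (2 ^ n) k}
    {a b : 'I_(2 ^ n).+1} :
  formal_difference_law r -> a != ord0 -> b != ord0 ->
  Aplus a != Aplus b -> f a = f b ->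
  act f (rpow r n) = act (restrict f (~: [set a; b])) (rpow r n).
Proof.
move=> [_ [_ [_ law4]]].
wlog lt_ab : a b / a < b => [wlog_ab a_ne0 b_ne0 sign_ab fab|].
  have [lt_ab|lt_ba|/val_inj eq_ab] := ltngtP a b; first exact: wlog_ab.
    by rewrite setUC; apply: wlog_ab; rewrite // eq_sym.
  by rewrite eq_ab eqxx in sign_ab.
move=> a_ne0 _ sign_ab fab.
have a_gt0 : 0 < a by move: a_ne0; rewrite lt0n -(inj_eq val_inj).
have two_le : 2 <= 2 ^ n by move: (ltn_ord b); lia.
have n_gt0 : 0 < n by have [n0|//] := posnP n; rewrite n0 in two_le.
rewrite (@collapse_kill_factor _ _ f a b a_ne0 lt_ab fab).
rewrite {1}(@collapse_factor _ _ f a b a_ne0 lt_ab fab).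
by rewrite -!act_comp law4 //; move: (ltn_ord b); lia.
Qed.

Section SignedCount.
Local Open Scope ring_scope.

Lemma pm1_opposite x y : Aplus x != Aplus y -> pm1 x + pm1 y = 0.
Proof. by rewrite /pm1; case: (Aplus x); case: (Aplus y). Qed.

Section Balance.
Context {n k : nat} (f : pmor n k).

Definition signed_count (A : {set 'I_n.+1}) (m : 'I_k.+1) : int :=
  \sum_(x in A | f x == m) pm1 x.

Definition balanced (A : {set 'I_n.+1}) : Prop :=
  forall m, m != ord0 -> signed_count A m = 0.

Lemma signed_count_setD (A B : {set 'I_n.+1}) m : B \subset A ->
  signed_count (A :\: B) m = signed_count A m - signed_count B m.
Proof.
move=> sBA; rewrite /signed_count !big_mkcondr [in RHS](big_setID B) /=.
by rewrite (setIidPr sBA) addrC addrK.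
Qed.

Lemma balanced_partner {D : {set 'I_n.+1}} {x : 'I_n.+1} :
  balanced D -> x \in D -> f x != ord0 ->
  exists2 y, y \in D & f y = f x /\ Aplus y != Aplus x.
Proof.
move=> balD xD fx_ne0.
have [y /and3P[yD /eqP fyx sign_yx] | no_partner] :=
  pickP [pred y | [&& y \in D, f y == f x & Aplus y != Aplus x]]; first by exists y.
have := balD _ fx_ne0; rewrite /signed_count.
rewrite (eq_bigr (fun=> pm1 x)) => [|y /andP[yD /eqP fyx]]; last first.
  by have := no_partner y; rewrite /= yD fyx eqxx /= => /negbFE/eqP; rewrite /pm1 => ->.
rewrite sumr_const => /eqP; rewrite mulrn_eq0 => /orP[/eqP/card0_eq/(_ x) | ].
  by rewrite unfold_in /= xD eqxx.
by rewrite /pm1; case: ifP.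
Qed.

Lemma balanced_remove_pair {D : {set 'I_n.+1}} {x y : 'I_n.+1} :
  balanced D -> x \in D -> y \in D -> f x = f y -> Aplus x != Aplus y ->
  balanced (D :\: [set x; y]).
Proof.
move=> balD xD yD fxy sign_xy m m_ne0.
have yDx : y \in D :\ x by rewrite in_setD1 yD andbT; apply: contraNneq sign_xy => ->.
have := balD m m_ne0; rewrite /signed_count !big_mkcondr.
rewrite (big_setD1 x xD) (big_setD1 y yDx) /= setDDl -fxy.
case: (f x == m); last by rewrite !add0r.
by rewrite addrA pm1_opposite // add0r.
Qed.

End Balance.

Lemma signed_count_setT n k (f : pmor (2 ^ n) k) m :
  m != ord0 -> signed_count f [set: _] m = push_pm1 f m.
Proof.
move=> m_ne0; apply: eq_bigl => x; rewrite inE; apply/esym/andb_idl => /eqP fx.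
by apply: contraNneq m_ne0 => x0; rewrite -fx x0 pmor0.
Qed.

Lemma sum_pm1_signed N (A : {set 'I_N.+1}) (p : int) : #|A| = `|p|%N ->
  (forall x, x \in A -> ((0 < p) -> Aplus x) /\ ((p < 0) -> ~~ Aplus x)) ->
  \sum_(x in A) pm1 x = p.
Proof.
move=> cardA signA; case: (ltrgt0P p) => [p_gt0|p_lt0|p0].
- rewrite (eq_bigr (fun=> 1)) => [|x /signA[/(_ p_gt0) ? _]];
    last by rewrite /pm1 ifT.
  by rewrite sumr_const cardA natz gtz0_abs.
- rewrite (eq_bigr (fun=> -1)) => [|x /signA[_ /(_ p_lt0) /negbTE ?]];
    last by rewrite /pm1 ifF.
  by rewrite sumr_const cardA mulNrn natz ltz0_abs ?opprK.
- by move: cardA; rewrite p0 => /cards0_eq ->; rewrite big_set0.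
Qed.

End SignedCount.

(* If [S \subset T] and [T :\: S] is balanced for [f], then restricting [f]
   to [T] or to [S] gives the same image of [r^n]: cancel pairs of
   opposite sign one at a time until [f] vanishes on what is left. *)
Lemma cancel_balanced (R : GammaRing) (r : R 2) n k (f : pmor (2 ^ n) k)
    (S T : {set 'I_(2 ^ n).+1}) :
  formal_difference_law r -> S \subset T -> balanced f (T :\: S) ->
  act (restrict f T) (rpow r n) = act (restrict f S) (rpow r n).
Proof.
move=> fdl; have [c] := ubnP #|T :\: S|; elim: c T => // c IH T card_lt sST balTS.
have [x /andP[xTS fx_ne0] | vanish] := pickP [pred x | (x \in T :\: S) && (f x != ord0)];
  last first.
  rewrite (restrict_vanishing f sST) // => x xTS.
  by have := vanish x; rewrite /= xTS => /negbFE/eqP.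
have [y yTS [fyx sign_yx]] := balanced_partner f balTS xTS fx_ne0.
have [xS xT] : x \notin S /\ x \in T by apply/andP; rewrite -in_setD.
have [yS yT] : y \notin S /\ y \in T by apply/andP; rewrite -in_setD.
have x_ne0 : x != ord0 by apply: contraNneq fx_ne0 => ->; rewrite pmor0.
have y_ne0 : y != ord0 by apply: contraNneq fx_ne0 => y0; rewrite -fyx y0 pmor0.
rewrite (cancel_pair fdl x_ne0 y_ne0); first last.
- by rewrite !restrictE xT yT fyx.
- by rewrite eq_sym.
rewrite restrict_restrict; apply: IH.
- by rewrite setD_pair_remove -ltnS (leq_trans _ card_lt) // ltnS card_setD_pair.
- apply/subsetP => z zS; rewrite !inE (subsetP sST) //=.
  by apply/norP; split; apply: contraTneq zS => ->.
- by rewrite setD_pair_remove; apply: (balanced_remove_pair f); rewrite // eq_sym.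
Qed.

Theorem lemma3p4p1 (R : GammaRing) (r : R 2) (n k : nat)
  (f : pmor (2 ^ n) k) (S : {set 'I_(2 ^ n).+1}) :
  formal_difference_law r ->
  ord0 \notin S ->
  (forall m : 'I_k.+1, m != ord0 ->
     #|[set x in S | f x == m]| = `|push_pm1 f m|%N /\
     (forall x, x \in S -> f x = m ->
        ((0 < push_pm1 f m)%R -> Aplus x) /\ ((push_pm1 f m < 0)%R -> ~~ Aplus x))) ->
  act f (rpow r n) = act (restrict f S) (rpow r n).
Proof.
move=> fdl _ hS; rewrite -{1}(restrict_setT f); apply: cancel_balanced => //.
move=> m m_ne0; have [cardS signS] := hS m m_ne0.
have countS : signed_count f S m = push_pm1 f m.
  transitivity (\sum_(x in [set x in S | f x == m]) pm1 x)%R.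
    by apply: eq_bigl => x; rewrite !inE.
  by apply: sum_pm1_signed => // x; rewrite inE => /andP[xS /eqP]; apply: signS.
by rewrite signed_count_setD ?subsetT // signed_count_setT // countS subrr.
Qed.
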